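(* Let $A$ and $B$ be commutative groups. (a) If $B$ is trivial, then $\mathcal D(A,B)=\{-\infty\}$. (b) If $A$ is trivial and $B$ is nontrivial, then $\mathcal D(A,B)=\{-\infty,0\}$. (c) If $A$ and $B$ are both nontrivial, then $\mathcal D(A,B)\setminus\{\infty\}=\{n\in\{-\infty\}\cup\mathbb N: n\le\delta^\circ(A,B)\}$.
   Context: For commutative groups $A,B$, $B^A$ denotes the commutative group (under pointwise addition) of all maps $A\to B$. For $a\in A$, the difference operator $\Delta_a:B^A\to B^A$ is $(\Delta_a f)(x)=f(x+a)-f(x)$. Let $\widetilde{\mathbb N}=\mathbb N\cup\{-\infty,\infty\}$ ($\mathbb N=\{0,1,2,\dots\}$), totally ordered with $-\infty$ least and $\infty$ greatest. The functional degree $\operatorname{fdeg}(f)\in\widetilde{\mathbb N}$ of $f\in B^A$ is: $-\infty$ if $f=0$; otherwise the least $n\in\mathbb N$ such that $\Delta_{a_1}\cdots\Delta_{a_{n+1}}f=0$ for all $a_1,\dots,a_{n+1}\in A$; and $\infty$ if no such $n$ exists. $\mathcal D(A,B)=\{\operatorname{fdeg}(f):f\in B^A\}$, and $\delta^\circ(A,B)=\sup\{\operatorname{fdeg}(f): f\in B^A,\ \operatorname{fdeg}(f)<\infty\}$ (supremum in $\widetilde{\mathbb N}$). *)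

From Stdlib Require Import ClassicalEpsilon.
From mathcomp Require Import all_boot all_order all_algebra.
Set Implicit Arguments. Unset Strict Implicit. Unset Printing Implicit Defensive.
Import GRing.Theory.
Local Open Scope ring_scope.

Inductive enat := NegInf | Fin of nat | PosInf.

Definition enat_le (x y : enat) : Prop :=
  match x, y with
  | NegInf, _ => True
  | _, PosInf => True
  | Fin m, Fin n => (m <= n)%N
  | _, _ => False
  end.

Definition Delta (A B : zmodType) (a : A) (f : A -> B) : A -> B :=
  fun x => f (x + a) - f x.

Definition iterDelta (A B : zmodType) (s : seq A) (f : A -> B) : A -> B :=
  foldr (@Delta A B) f s.

Definition vanishes (A B : zmodType) (f : A -> B) (n : nat) : Prop :=
  forall s : seq A, size s = n.+1 -> forall x, iterDelta s f x = 0.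

Definition is_fdeg (A B : zmodType) (f : A -> B) (d : enat) : Prop :=
  match d with
  | NegInf => forall x, f x = 0
  | Fin n => (exists x, f x <> 0) /\ vanishes f n /\
             (forall m, vanishes f m -> (n <= m)%N)
  | PosInf => (exists x, f x <> 0) /\ (forall n, ~ vanishes f n)
  end.

Definition fdeg (A B : zmodType) (f : A -> B) : enat :=
  epsilon (inhabits NegInf) (is_fdeg f).

Definition Dset (A B : zmodType) (d : enat) : Prop :=
  exists f : A -> B, fdeg f = d.

Definition is_sup (S : enat -> Prop) (s : enat) : Prop :=
  (forall x, S x -> enat_le x s) /\
  (forall u, (forall x, S x -> enat_le x u) -> enat_le s u).

Definition delta0 (A B : zmodType) : enat :=
  epsilon (inhabits NegInf)
    (is_sup (fun d => exists f : A -> B, fdeg f = d /\ d <> PosInf)).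

Definition trivial_group (G : zmodType) : Prop := forall x : G, x = 0.

From mathcomp Require Import all_boot all_order all_algebra.
From Stdlib Require Import Classical ClassicalEpsilon.
From mathcomp Require Import zify.
Set Implicit Arguments. Unset Strict Implicit. Unset Printing Implicit Defensive.
Import GRing.Theory.
Local Open Scope ring_scope.

(* The set of finite functional degrees is downward closed: if f has degree
   m and s is a sequence of m differences that does not kill f, then applying
   the last m - n of them to f gives a function of degree exactly n.  Hence
   the finite degrees form an initial segment of -oo < 0 < 1 < ..., and that
   segment is everything up to its supremum delta°.  Parts (a) and (b) are direct: a map into the trivial
   group is 0, and every map on the trivial group is constant, so it is
   killed by a single difference. *)

Lemma exists_least_nat (P : nat -> Prop) n :
  P n -> exists k, P k /\ forall m, P m -> (k <= m)%N.
Proof.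
elim/ltn_ind: n => n IH Pn.
case: (classic (exists m, (m < n)%N /\ P m)) => [[m [ltmn Pm]]|none].
  exact: IH ltmn Pm.
exists n; split=> // m Pm; rewrite leqNgt; apply/negP => ltmn.
by apply: none; exists m.
Qed.

Lemma enat_le_trans x y z : enat_le x y -> enat_le y z -> enat_le x z.
Proof.
by case: x => [|a|]; case: y => [|b|]; case: z => [|c|] //=; exact: leq_trans.
Qed.

Lemma is_sup_exists (S : enat -> Prop) : exists s, is_sup S s.
Proof.
case: (classic (exists m, forall x, S x -> enat_le x (Fin m))) => [[m Sm]|unbdd].
  case: (classic (exists x, S x /\ x <> NegInf)) => [[x [Sx x_neq]]|none]; last first.
    exists NegInf; split=> // -[|n|] Sx //; case: none.
    - by exists (Fin n).
    - by exists PosInf.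
  have [k [Sk k_min]] :=
    @exists_least_nat (fun m => forall x, S x -> enat_le x (Fin m)) m Sm.
  exists (Fin k); split=> // -[|j|] ub //=.
  - by move: (ub x Sx) x_neq; case: x {Sx}.
  - by apply: k_min => y Sy; move: (ub y Sy); case: y {Sy}.
exists PosInf; split=> [[]|[|j|] ub] //; exfalso; apply: unbdd.
  by exists 0%N => x Sx; move: (ub x Sx); case: x {Sx}.
by exists j.
Qed.

(* A supremum of at least n is attained up to n: the predecessor of n (or -oo
   when n = 0) would otherwise be a smaller upper bound. *)
Lemma is_sup_ge_Fin (S : enat -> Prop) s n :
  is_sup S s -> enat_le (Fin n) s -> exists x, S x /\ enat_le (Fin n) x.
Proof.
move=> [_ s_least] le_ns; apply: NNPP => none.
have : enat_le s (if n is n'.+1 then Fin n' else NegInf).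
  apply: s_least => -[|m|] Sx //=; last by case: none; exists PosInf.
  case: (leqP n m) => [le_nm|]; first by case: none; exists (Fin m).
  by case: n {le_ns none}.
by move/(enat_le_trans le_ns); case: n {le_ns none} => //= n; rewrite ltnn.
Qed.

Section Differences.
Variables A B : zmodType.
Implicit Types (f : A -> B) (s : seq A).

Lemma iterDelta_cat s t f : iterDelta (s ++ t) f = iterDelta s (iterDelta t f).
Proof. exact: foldr_cat. Qed.

Lemma iterDelta_eq0 f : (forall x, f x = 0) -> forall s x, iterDelta s f x = 0.
Proof. by move=> f0; elim=> [|a s IH] x //=; rewrite /Delta !IH subr0. Qed.

Lemma vanishesS f m : vanishes f m -> vanishes f m.+1.
Proof. by move=> van [|a s] //= [] size_s x; rewrite /Delta !van // subrr. Qed.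

Lemma vanishes_leq f m k : vanishes f m -> (m <= k)%N -> vanishes f k.
Proof.
move=> van; elim: k => [|k IH]; first by rewrite leqn0 => /eqP <-.
by rewrite leq_eqVlt => /orP [/eqP <- //|/IH/vanishesS].
Qed.

Lemma is_fdeg_unique f d d' : is_fdeg f d -> is_fdeg f d' -> d = d'.
Proof.
have nz_absurd (P : Prop) : (exists x, f x <> 0) -> (forall x, f x = 0) -> P.
  by move=> [x fx] f0; case: (fx (f0 x)).
case: d => [|n|]; case: d' => [|n'|] //=.
- by move=> f0 [nz _]; exact: nz_absurd nz f0.
- by move=> f0 [nz _]; exact: nz_absurd nz f0.
- by move=> [nz _] f0; exact: nz_absurd nz f0.
- move=> [_ [van min]] [_ [van' min']]; congr Fin; apply/eqP.
  by rewrite eqn_leq min // min'.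
- by move=> [_ [van _]] [_ no_van]; case: (no_van n).
- by move=> [nz _] f0; exact: nz_absurd nz f0.
- by move=> [_ no_van] [_ [van _]]; case: (no_van n').
Qed.

Lemma is_fdeg_exists f : exists d, is_fdeg f d.
Proof.
case: (classic (forall x, f x = 0)) => [f0|/not_all_ex_not nz].
  by exists NegInf.
case: (classic (exists n, vanishes f n)) => [[n van]|no_van].
  have [k [van_k k_min]] := exists_least_nat van.
  by exists (Fin k).
by exists PosInf; split=> // n van; apply: no_van; exists n.
Qed.

Lemma fdegP f : is_fdeg f (fdeg f).
Proof. exact: epsilon_spec (is_fdeg_exists f). Qed.

Lemma fdeg_eq f d : is_fdeg f d -> fdeg f = d.
Proof. exact: is_fdeg_unique (fdegP f). Qed.

Lemma fdeg0 : fdeg (fun _ : A => 0 : B) = NegInf.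
Proof. exact: fdeg_eq. Qed.

Lemma fdeg_FinP f n :
  fdeg f = Fin n <->
  (exists s, size s = n /\ exists x, iterDelta s f x <> 0) /\ vanishes f n.
Proof.
split=> [deg_f|[[s [size_s [x nz_x]]] van]].
  have := fdegP f; rewrite deg_f => -[[x fx] [van min]]; split=> //.
  case: n {deg_f} van min => [|n] van min; first by exists [::]; split; last exists x.
  apply: NNPP => none; suff /min : vanishes f n by rewrite ltnn.
  by move=> s size_s y; apply: NNPP => nz_y; apply: none; exists s; split; last exists y.
apply: fdeg_eq; split; last split=> // m van_m.
  apply: NNPP => f0; apply: nz_x; apply: iterDelta_eq0 => y.
  by apply: NNPP => fy; apply: f0; exists y.
rewrite leqNgt; apply/negP => lt_mn.
case: n size_s lt_mn van => // n size_s lt_mn van.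
by apply: nz_x; exact: vanishes_leq van_m lt_mn s size_s x.
Qed.

Lemma fdeg_downward f m n :
  fdeg f = Fin m -> (n <= m)%N -> exists g : A -> B, fdeg g = Fin n.
Proof.
move=> /fdeg_FinP [[s [size_s [x nz_x]]] van] le_nm.
exists (iterDelta (drop n s) f); apply/fdeg_FinP; split.
  exists (take n s); split; first by rewrite size_take size_s; case: ltnP; lia.
  by exists x; rewrite -iterDelta_cat cat_take_drop.
move=> w size_w y; rewrite -iterDelta_cat; apply: van.
by rewrite size_cat size_drop size_w size_s; lia.
Qed.

Lemma fdeg_trivial_codomain f : trivial_group B -> fdeg f = NegInf.
Proof. by move=> trivB; apply: fdeg_eq => x; exact: trivB. Qed.

Lemma vanishes0_trivial_domain f : trivial_group A -> vanishes f 0.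
Proof.
move=> trivA [|a [|b s]] // _ x /=.
by rewrite /Delta (trivA (x + a)) (trivA x) subrr.
Qed.

Lemma fdeg_vanishes0 f : vanishes f 0 -> fdeg f = NegInf \/ fdeg f = Fin 0.
Proof.
move=> van; case: (classic (forall x, f x = 0)) => [f0|/not_all_ex_not nz].
  by left; apply: fdeg_eq.
by right; apply: fdeg_eq.
Qed.

Lemma fdeg_const (b : B) : b <> 0 -> vanishes (fun _ : A => b) 0 ->
  fdeg (fun _ : A => b) = Fin 0.
Proof. by move=> nz van; apply: fdeg_eq; split; first exists 0. Qed.

Lemma delta0P : is_sup (fun d => exists f : A -> B, fdeg f = d /\ d <> PosInf)
                       (delta0 A B).
Proof. exact: epsilon_spec (is_sup_exists _). Qed.

Lemma Dset_finite_iff d :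
  Dset A B d /\ d <> PosInf <->
  (d = NegInf \/ exists n, d = Fin n) /\ enat_le d (delta0 A B).
Proof.
split=> [[[f deg_f] d_fin]|[[->|[n ->]] le_d]].
- split; first by case: d deg_f d_fin => [|n|] // _ _; [left|right; exists n].
  by apply: delta0P.1; exists f.
- by split=> //; exists (fun _ => 0); exact: fdeg0.
- have [[|m|] [[f [deg_f x_fin]] le_nm]] := is_sup_ge_Fin delta0P le_d => //.
  by have [g deg_g] := fdeg_downward deg_f le_nm; split=> //; exists g.
Qed.

End Differences.

Theorem lemma2 (A B : zmodType) :
  (trivial_group B -> forall d, Dset A B d <-> d = NegInf) /\
  (trivial_group A -> ~ trivial_group B ->
     forall d, Dset A B d <-> (d = NegInf \/ d = Fin 0)) /\
  (~ trivial_group A -> ~ trivial_group B ->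
     forall d, (Dset A B d /\ d <> PosInf) <->
               ((d = NegInf \/ exists n, d = Fin n) /\ enat_le d (delta0 A B))).
Proof.
split; [|split].
- move=> trivB d; split=> [[f <-]|->]; first exact: fdeg_trivial_codomain.
  by exists (fun _ => 0); exact: fdeg0.
- move=> trivA /not_all_ex_not [b nz_b] d; split=> [[f <-]|[->|->]].
  + exact/fdeg_vanishes0/vanishes0_trivial_domain.
  + by exists (fun _ => 0); exact: fdeg0.
  + by exists (fun _ => b); apply/fdeg_const/vanishes0_trivial_domain.
- by move=> _ _; exact: Dset_finite_iff.
Qed.
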